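(* Let $K$ be a field and $n\ge 2$. If $\{\alpha_i\in\mathbb{M}(K^n) : 1\le i\le m\}$ is a collection of M-flags in general position with $m\ge 2n-1$, then no $\alpha\in\mathbb{M}(K^n)$ touches all of the M-flags $\alpha_1,\dots,\alpha_m$ simultaneously.
   Context: An M-flag in $\mathbb{P}(K^n)$ is a pair $\alpha=(\overline{H}^{+},\overline{v}^{-})$ where $\overline{H}^{+}\subset\mathbb{P}(K^n)$ is a projective hyperplane and $\overline{v}^{-}\in\overline{H}^{+}$ is a point; $\mathbb{M}(K^n)$ denotes the set of all M-flags. Two M-flags $\alpha_1=(\overline{H}^+_1,\overline{v}^-_1)$, $\alpha_2=(\overline{H}^+_2,\overline{v}^-_2)$ touch each other if $\overline{v}^-_1\in\overline{H}^+_2$ or $\overline{v}^-_2\in\overline{H}^+_1$. A collection $\{\alpha_i=(\overline{H}^+_i,\overline{v}^-_i) : i\in I\}$ is in general position if for every $J\subset I$ with $|J|=n$: (a) $\bigcap_{j\in J}\overline{H}^+_j=\emptyset$, and (b) the points $\overline{v}^-_j$, $j\in J$, span all of $\mathbb{P}(K^n)$ (i.e. the corresponding vectors span $K^n$). *)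

From mathcomp Require Import all_boot all_order all_algebra.
Set Implicit Arguments. Unset Strict Implicit. Unset Printing Implicit Defensive.
Import GRing.Theory.
Local Open Scope ring_scope.

(* Points of P(K^n) are represented by nonzero vectors of K^n (row vectors),
   projective hyperplanes by nonzero linear functionals, also stored as row
   vectors h; the hyperplane is {[w] | h . w = 0}.  All notions below are
   invariant under rescaling of representatives. *)

Definition pairing (K : fieldType) (n : nat) (h w : 'rV[K]_n) : K :=
  \sum_(k < n) h 0 k * w 0 k.

Definition incid (K : fieldType) (n : nat) (h w : 'rV[K]_n) : Prop :=
  pairing h w = 0.

Record Mflag (K : fieldType) (n : nat) := MFlag {
  mf_H : 'rV[K]_n;
  mf_v : 'rV[K]_n;
  mf_H_nz : mf_H != 0;
  mf_v_nz : mf_v != 0;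
  mf_inc : incid mf_H mf_v }.

Definition touches (K : fieldType) (n : nat) (a b : Mflag K n) : Prop :=
  incid (mf_H b) (mf_v a) \/ incid (mf_H a) (mf_v b).

Definition general_position (K : fieldType) (n : nat) (I : finType)
    (a : I -> Mflag K n) : Prop :=
  forall J : {set I}, #|J| = n ->
    (~ exists w : 'rV[K]_n, w != 0 /\ forall j, j \in J -> incid (mf_H (a j)) w)
    /\
    \rank (\sum_(j in J) <<mf_v (a j)>>)%MS = n.

(* A touching flag alpha = (H, v) splits the collection into the flags whose
   hyperplane passes through v and the flags whose point lies on H.  General
   position allows at most n - 1 hyperplanes through a common point and at most
   n - 1 points on a common hyperplane (n points there would span at most H), so
   at most 2n - 2 flags can touch alpha. *)

From mathcomp Require Import all_boot all_order all_algebra.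
From mathcomp Require Import zify.
Set Implicit Arguments. Unset Strict Implicit. Unset Printing Implicit Defensive.
Import GRing.Theory.
Local Open Scope ring_scope.

Lemma exists_subset_card (T : finType) (A : {set T}) (k : nat) :
  (k <= #|A|)%N -> exists2 J : {set T}, J \subset A & #|J| = k.
Proof.
rewrite -bin_gt0 -cards_draws => /card_gt0P [J].
by rewrite inE => /andP [JA /eqP cardJ]; exists J.
Qed.

Lemma rank_sum_incid_lt (K : fieldType) (n : nat) (I : finType) (J : {set I})
    (h : 'rV[K]_n) (v : I -> 'rV[K]_n) :
  h != 0 -> (forall j, j \in J -> incid h (v j)) ->
  (\rank (\sum_(j in J) <<v j>>) < n)%N.
Proof.
move=> h_nz hv.
have sub_ker : ((\sum_(j in J) <<v j>>) <= kermx h^T)%MS.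
  apply/sumsmx_subP => j jJ; rewrite genmxE; apply/sub_kermxP.
  apply/matrixP => i k; rewrite !ord1 !mxE -[RHS](hv j jJ).
  by apply: eq_bigr => l _; rewrite mxE mulrC.
have rank_h : (0 < \rank h <= n)%N.
  by rewrite lt0n mxrank_eq0 h_nz rank_leq_col.
by have := mxrankS sub_ker; rewrite mxrank_ker mxrank_tr; lia.
Qed.

Section GeneralPosition.

Variables (K : fieldType) (n : nat) (I : finType) (a : I -> Mflag K n).
Hypothesis a_gp : general_position a.

Lemma card_hyperplanes_through_lt (w : 'rV[K]_n) :
  w != 0 -> (#|[set i | pairing (mf_H (a i)) w == 0%R]| < n)%N.
Proof.
move=> w_nz; rewrite ltnNge; apply/negP => /exists_subset_card [J JA cardJ].
apply: (proj1 (a_gp cardJ)); exists w; split=> // j /(subsetP JA).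
by rewrite inE => /eqP.
Qed.

Lemma card_points_on_hyperplane_lt (h : 'rV[K]_n) :
  h != 0 -> (#|[set i | pairing h (mf_v (a i)) == 0%R]| < n)%N.
Proof.
move=> h_nz; rewrite ltnNge; apply/negP => /exists_subset_card [J JB cardJ].
have : (\rank (\sum_(j in J) <<mf_v (a j)>>) < n)%N.
  by apply: (rank_sum_incid_lt h_nz) => j /(subsetP JB); rewrite inE => /eqP.
by rewrite (proj2 (a_gp cardJ)) ltnn.
Qed.

End GeneralPosition.

Theorem mainTheorem7 (K : fieldType) (n m : nat) :
  (2 <= n)%N -> (2 * n - 1 <= m)%N ->
  forall a : 'I_m -> Mflag K n,
    general_position a ->
    ~ exists alpha : Mflag K n, forall i : 'I_m, touches alpha (a i).
Proof.
move=> _ hm a a_gp [alpha touch_all].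
set A := [set i | pairing (mf_H (a i)) (mf_v alpha) == 0].
set B := [set i | pairing (mf_H alpha) (mf_v (a i)) == 0].
have cover : A :|: B = setT.
  by apply/setP => i; rewrite !inE; case: (touch_all i) => /eqP ->; rewrite ?orbT.
have A_lt : (#|A| < n)%N := card_hyperplanes_through_lt a_gp (mf_v_nz alpha).
have B_lt : (#|B| < n)%N := card_points_on_hyperplane_lt a_gp (mf_H_nz alpha).
have [card_le _] := leq_card_setU A B.
by move: card_le; rewrite cover cardsT card_ord; lia.
Qed.
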